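(* Let $m\ge1$ and $2\le K\le N$ be integers with $m^2(K-1)-mN\ne0$. Put $$\Delta=(m(K-1))^2+(N-K+1)\big(m^2(K-1)-mN\big),$$ assume $\Delta\ge0$, and define $$x_0=\frac{-m(K-1)+\sqrt{\Delta}}{m^2(K-1)-mN},\qquad d=\frac{Nm}{m+\frac1{x_0}}.$$ Assume $0<x_0\le\frac12$ and $d\le N$. Use the multiplicity assignment with coefficient $t=x_0$ (received symbol multiplicity $M>0$, each 1-bit-flipped neighbour multiplicity $tM$, others $0$). Then for every transmitted codeword and every error pattern of the binary symmetric channel flipping at most $d$ bits in total, the ASD sufficient condition $S\ge\sqrt{2(K-1)C}$ holds, i.e., ASD is guaranteed to decode up to $d$ bit errors.
   Context: Setting: a Reed–Solomon code of length $N$ and dimension $K$ over $GF(2^m)$ whose symbols are sent as $m$ bits each over a binary symmetric channel. The multiplicity assignment is fixed independently of the received word: in each position the received symbol gets multiplicity $M$, each of the $m$ symbols obtained from it by flipping exactly one bit gets multiplicity $tM$ ($0\le t\le1$), and all other symbols get $0$. The score $S$ is the sum over the $N$ positions of the multiplicity assigned to the transmitted symbol; the (large-multiplicity approximation of the) cost is $C=\frac12\sum(\text{multiplicities})^2=\frac N2M^2(1+mt^2)$. *)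

From HB Require Import structures.
From mathcomp Require Import all_boot all_order all_algebra.
From mathcomp Require Import reals.
Set Implicit Arguments. Unset Strict Implicit. Unset Printing Implicit Defensive.
Import Order.TTheory GRing.Theory Num.Theory.
Local Open Scope ring_scope.

(* A symbol of GF(2^m), viewed as its m-bit binary representation. *)
Definition sym (m : nat) := {ffun 'I_m -> bool}.

Definition hamming (m : nat) (a b : sym m) : nat := #|[pred j | a j != b j]|.

Definition bitweight (m : nat) (e : sym m) : nat := #|[pred j | e j]|.

(* Received symbol: transmitted symbol XOR error mask. *)
Definition flip (m : nat) (c e : sym m) : sym m := [ffun j => addb (c j) (e j)].

Definition mult (R : realType) (m : nat) (M t : R) (r a : sym m) : R :=
  if a == r then M else if hamming a r == 1%N then t * M else 0.

Definition score (R : realType) (m N : nat) (M t : R)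
  (r c : 'I_N -> sym m) : R :=
  \sum_(i < N) mult M t (r i) (c i).

(* Cost (large-multiplicity approximation): (1/2) * sum of squared multiplicities. *)
Definition cost (R : realType) (m N : nat) (M t : R) (r : 'I_N -> sym m) : R :=
  2^-1 * \sum_(i < N) \sum_(a : sym m) (mult M t (r i) a) ^+ 2.

From HB Require Import structures.
From mathcomp Require Import all_boot all_order all_algebra.
From mathcomp Require Import reals.
From mathcomp Require Import ring lra zify.
Set Implicit Arguments. Unset Strict Implicit. Unset Printing Implicit Defensive.
Import Order.TTheory GRing.Theory Num.Theory.
Local Open Scope ring_scope.

(* A position whose symbol suffered w bit flips contributes M, tM or 0 to the
   score according as w = 0, 1 or w >= 2; since t <= 1/2 this is at least
   M (1 - (1 - t) w), so the score is at least M (N - (1 - t) W) for W total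
   bit errors, while the cost is at most (N/2) M^2 (1 + m t^2).  The choice of
   t = x0 as a root of (m^2 k - m N) t^2 + 2 m k t + k - N = 0 (k = K - 1)
   is exactly what makes N (1 + m t^2) = k (m t + 1)^2, and with the radius
   d = N m t / (m t + 1) this gives N - (1 - t) d = k (m t + 1).  Hence for
   W <= d the score is at least M k (m t + 1), whose square is 2 k times the
   cost bound. *)

Section Symbols.
Variable m : nat.
Implicit Types a b c e r : sym m.

Lemma hamming_eq0 a b : (hamming a b == 0)%N = (a == b).
Proof.
apply/idP/eqP => [/eqP/card0_eq da | ->].
  by apply/ffunP => j; have := da j; rewrite !inE /= => /negbFE/eqP.
by apply/eqP/eq_card0 => j; rewrite !inE eqxx.
Qed.

Lemma hamming_flip c e : hamming c (flip c e) = bitweight e.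
Proof.
by apply: eq_card => j; rewrite !inE /flip ffunE; case: (c j); case: (e j).
Qed.

Lemma card_hamming1 r : (#|[pred a | hamming a r == 1%N]| <= m)%N.
Proof.
pose toggle j : sym m := [ffun k => if k == j then ~~ r k else r k].
have sub_codom : [pred a | hamming a r == 1%N] \subset codom toggle.
  apply/subsetP => a; rewrite inE /= /hamming -cardsE => /cards1P [j dj].
  apply/codomP; exists j; apply/ffunP => k; rewrite ffunE.
  have := congr1 (fun S : {set 'I_m} => k \in S) dj; rewrite !inE /=.
  by case: (k =P j) => [-> | _ /negbFE/eqP //]; case: (a j); case: (r j).
apply: leq_trans (subset_leq_card sub_codom) _.
by apply: leq_trans (card_size _) _; rewrite size_codom card_ord.
Qed.

End Symbols.

Section Multiplicities.
Variables (R : realType) (m : nat) (M t : R).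

Lemma mult_flip (c e : sym m) :
  mult M t (flip c e) c =
  if bitweight e == 0%N then M else if bitweight e == 1%N then t * M else 0.
Proof. by rewrite /mult -hamming_eq0 hamming_flip. Qed.

Lemma mult_flip_ge (c e : sym m) : 0 <= M -> t <= 1 / 2 ->
  M * (1 - (1 - t) * (bitweight e)%:R) <= mult M t (flip c e) c.
Proof.
move=> M_ge0 t_le; rewrite mult_flip.
case: (bitweight e) => [|[|w]] /=; first by rewrite mulr0 subr0 mulr1.
  by rewrite mulr1 mulrC; lra.
have : 2 <= w.+2%:R :> R by rewrite (ler_nat R 2).
move: w.+2%:R => W W_ge2.
have : 1 <= (1 - t) * W by nra.
by nra.
Qed.

Lemma sum_sqr_mult_le (r : sym m) :
  \sum_(a : sym m) mult M t r a ^+ 2 <= M ^+ 2 + m%:R * (t * M) ^+ 2.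
Proof.
apply: (@le_trans _ _ (\sum_(a : sym m) ((if a == r then M ^+ 2 else 0)
        + (if hamming a r == 1%N then (t * M) ^+ 2 else 0)))).
  apply: ler_sum => a _; rewrite /mult.
  case: eqP => [->|_]; last by rewrite add0r; case: ifP; rewrite ?expr0n.
  by rewrite lerDl; case: ifP; rewrite ?sqr_ge0.
rewrite big_split /= -!big_mkcond /= big_pred1_eq lerD2l sumr_const mulr_natl.
by apply: ler_wpMn2l; [exact: sqr_ge0 | exact: card_hamming1].
Qed.

Variable N : nat.

Lemma score_flip_ge (c e : 'I_N -> sym m) : 0 <= M -> t <= 1 / 2 ->
  M * (N%:R - (1 - t) * (\sum_(i < N) bitweight (e i))%N%:R)
    <= score M t (fun i => flip (c i) (e i)) c.
Proof.
move=> M_ge0 t_le.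
apply: le_trans (ler_sum _ (fun i _ => mult_flip_ge (c i) (e i) M_ge0 t_le)).
by rewrite -mulr_sumr sumrB sumr_const card_ord -mulr_sumr -natr_sum.
Qed.

Lemma cost_le (r : 'I_N -> sym m) :
  cost M t r <= N%:R / 2 * (M ^+ 2 + m%:R * (t * M) ^+ 2).
Proof.
rewrite /cost -mulrA mulrCA ler_wpM2l ?invr_ge0 ?ler0n //.
apply: le_trans (ler_sum _ (fun i _ => sum_sqr_mult_le (r i))) _.
by rewrite sumr_const card_ord (mulr_natl _ N).
Qed.

End Multiplicities.

Lemma quadratic_root_halfb (R : rcfType) (a b c t : R) :
  a != 0 -> 0 <= b ^+ 2 - a * c ->
  t = (- b + Num.sqrt (b ^+ 2 - a * c)) / a ->
  a * t ^+ 2 + 2 * b * t + c = 0.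
Proof.
move=> a_neq0 disc_ge0 ->.
apply: (mulfI a_neq0); rewrite mulr0.
have -> : a * (a * ((- b + Num.sqrt (b ^+ 2 - a * c)) / a) ^+ 2
             + 2 * b * ((- b + Num.sqrt (b ^+ 2 - a * c)) / a) + c)
          = Num.sqrt (b ^+ 2 - a * c) ^+ 2 - (b ^+ 2 - a * c).
  by field.
by rewrite sqr_sqrtr // subrr.
Qed.

Lemma decoding_radius (R : realFieldType) (n k mm t d : R) :
  0 < t -> 0 <= mm ->
  n * (1 + mm * t ^+ 2) = k * (mm * t + 1) ^+ 2 ->
  d = n * mm / (mm + 1 / t) ->
  n - (1 - t) * d = k * (mm * t + 1).
Proof.
move=> t_gt0 mm_ge0 root ->.
have mt1_neq0 : mm * t + 1 != 0 by apply: lt0r_neq0; nra.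
apply: (mulIf mt1_neq0); transitivity (n * (1 + mm * t ^+ 2)).
  by field; rewrite mt1_neq0 lt0r_neq0.
by rewrite root; ring.
Qed.

Lemma sqrtr_le (R : rcfType) (x y : R) : 0 <= y -> x <= y ^+ 2 -> Num.sqrt x <= y.
Proof. by move=> y_ge0 x_le; rewrite -(ger0_norm y_ge0) -sqrtr_sqr ler_wsqrtr. Qed.

Theorem theorem2 (R : realType) (m N K : nat)
  (hm : (1 <= m)%N) (hK : (2 <= K)%N) (hKN : (K <= N)%N)
  (ha : ((m ^ 2 * (K - 1))%:R - (m * N)%:R : R) != 0)
  (hDelta : 0 <= ((m * (K - 1))%:R ^+ 2
                  + (N - K + 1)%:R * ((m ^ 2 * (K - 1))%:R - (m * N)%:R) : R))
  (x0 d : R)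
  (hx0 : x0 = (- (m * (K - 1))%:R
               + Num.sqrt ((m * (K - 1))%:R ^+ 2
                           + (N - K + 1)%:R * ((m ^ 2 * (K - 1))%:R - (m * N)%:R)))
              / ((m ^ 2 * (K - 1))%:R - (m * N)%:R))
  (hd : d = (N * m)%:R / (m%:R + 1 / x0))
  (hx0pos : 0 < x0) (hx0half : x0 <= 1 / 2) (hdN : d <= N%:R)
  (M : R) (hM : 0 < M)
  (c e : 'I_N -> sym m)
  (he : ((\sum_(i < N) bitweight (e i))%N)%:R <= d) :
  Num.sqrt (2 * (K - 1)%:R * cost M x0 (fun i => flip (c i) (e i)))
    <= score M x0 (fun i => flip (c i) (e i)) c.
Proof.
have nK : (N - K + 1)%:R = N%:R - (K - 1)%:R :> R by rewrite -natrB; [congr _%:R | ]; lia.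
rewrite nK !natrM ?natrX in hx0 hDelta ha hd.
set n : R := N%:R in hx0 hDelta ha hd *; set k : R := (K - 1)%:R in hx0 hDelta ha hd *.
set mm : R := m%:R in hx0 hDelta ha hd *; set a := mm ^+ 2 * k - mm * n in hx0 hDelta ha.
have disc : (mm * k) ^+ 2 + (n - k) * a = (mm * k) ^+ 2 - a * (k - n) by ring.
rewrite disc in hx0 hDelta.
have root : n * (1 + mm * x0 ^+ 2) = k * (mm * x0 + 1) ^+ 2.
  by have := quadratic_root_halfb ha hDelta hx0; rewrite /a; nra.
have radius := decoding_radius hx0pos (ler0n R m) root hd.
have y_ge0 : 0 <= M * (k * (mm * x0 + 1)).
  by rewrite !mulr_ge0 ?addr_ge0 ?mulr_ge0 ?ler0n ?ltW.
have score_ge : M * (k * (mm * x0 + 1)) <= score M x0 (fun i => flip (c i) (e i)) c.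
  rewrite -radius; apply: le_trans (score_flip_ge c e (ltW hM) hx0half).
  by rewrite ler_pM2l // lerD2l lerN2 ler_wpM2l //; lra.
apply: le_trans score_ge; apply: sqrtr_le => //.
apply: le_trans (ler_wpM2l _ (cost_le M x0 _)) _; first by rewrite mulr_ge0 ?ler0n.
suff -> : (M * (k * (mm * x0 + 1))) ^+ 2
          = 2 * k * (n / 2 * (M ^+ 2 + mm * (x0 * M) ^+ 2)) by [].
by transitivity (k * M ^+ 2 * (k * (mm * x0 + 1) ^+ 2)); [ring | rewrite -root; field].
Qed.
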